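(* Let $\rho>0$ and $n\in\mathbb{Z}_+$. For the ancestral chain started at $(n,0,1)$ with $s(0)=0$, $\mathbb{P}_{n,0,1,0}[s(\tau)=0]=\prod_{i=1}^n\frac{i(i+1)}{i(i+1)+\rho}$, where $\tau=\inf\{s\ge0:(a(s),b(s),c(s))\in\{(0,0,1),(1,1,0)\}\}$ (the empty product being $1$).
   Context: The ancestral chain $(a(t),b(t),c(t))$ with parameter $\rho$ is the continuous-time Markov chain on $\mathbb{Z}_+^3\setminus\{\mathbf 0\}$ which from $(a,b,c)$ jumps to $(a+1,b+1,c-1)$ at rate $c\rho/2$ (a recombination event), to $(a-1,b-1,c+1)$ at rate $ab$, to $(a-1,b,c)$ at rate $ac+a(a-1)/2$, to $(a,b-1,c)$ at rate $bc+b(b-1)/2$, and to $(a,b,c-1)$ at rate $c(c-1)/2$. $s(t)$ is the number of recombination jumps in $(0,t)$. *)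

From HB Require Import structures.
From mathcomp Require Import all_boot all_order all_algebra.
From mathcomp Require Import reals ereal sequences.
Set Implicit Arguments. Unset Strict Implicit. Unset Printing Implicit Defensive.
Import Order.TTheory GRing.Theory Num.Theory.
Local Open Scope ring_scope.

Definition state := (nat * nat * nat)%type.

Inductive move := Recomb | Mix | CoalA | CoalB | CoalC.

Definition isRecomb (m : move) : bool := if m is Recomb then true else false.

Definition all_moves : seq move := [:: Recomb; Mix; CoalA; CoalB; CoalC].

(* The target state of a jump (nat subtraction is only used where the
   corresponding rate vanishes if the coordinate is 0). *)
Definition step (x : state) (m : move) : state :=
  let: (a, b, c) := x in
  match m with
  | Recomb => (a.+1, b.+1, c.-1)
  | Mix => (a.-1, b.-1, c.+1)
  | CoalA => (a.-1, b, c)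
  | CoalB => (a, b.-1, c)
  | CoalC => (a, b, c.-1)
  end.

Definition rate {R : realType} (rho : R) (x : state) (m : move) : R :=
  let: (a, b, c) := x in
  let a' := a%:R in let b' := b%:R in let c' := c%:R in
  match m with
  | Recomb => c' * rho / 2
  | Mix => a' * b'
  | CoalA => a' * c' + a' * (a' - 1) / 2
  | CoalB => b' * c' + b' * (b' - 1) / 2
  | CoalC => c' * (c' - 1) / 2
  end.

Definition total_rate {R : realType} (rho : R) (x : state) : R :=
  \sum_(m <- all_moves) rate rho x m.

Definition jump_prob {R : realType} (rho : R) (x : state) (m : move) : R :=
  rate rho x m / total_rate rho x.

(* Probability (under the jump chain started at x) of the cylinder event that
   the first jumps are exactly the moves ms. *)
Fixpoint path_weight {R : realType} (rho : R) (x : state) (ms : seq move) : R :=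
  match ms with
  | [::] => 1
  | m :: ms' => jump_prob rho x m * path_weight rho (step x m) ms'
  end.

Definition target (x : state) : bool :=
  (x == (0, 0, 1)%N) || (x == (1, 1, 0)%N).

(* The path of ms from x first hits the target exactly at its last state
   (i.e. tau is the time of the last jump of ms, or 0 if ms is empty). *)
Definition first_hit (x : state) (ms : seq move) : bool :=
  let sts := scanl step x ms in
  ~~ has target (belast x sts) && target (last x sts).

Fixpoint all_paths (k : nat) : seq (seq move) :=
  match k with
  | 0 => [:: [::]]
  | k'.+1 => [seq m :: ms | m <- all_moves, ms <- all_paths k']
  end.

(* P_{x, s=0}[ tau < oo and s(tau) = 0 ]: the sum, over the disjoint cylinder
   events determined by the jump sequence up to time tau, of those with no
   recombination jump (s(tau) = number of Recomb jumps up to tau). *)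
Definition prob_no_recomb_before_tau {R : realType} (rho : R) (x : state)
  : \bar R :=
  (\sum_(0 <= k <oo)
     (\sum_(ms <- all_paths k | first_hit x ms && (count isRecomb ms == 0%N))
        path_weight rho x ms)%:E)%E.

(** Before hitting the target, a recombination-free path started at [(a,0,1)]
   can only jump by [CoalA] (the other non-recombination rates vanish there),
   so it descends deterministically [(a,0,1) -> (a-1,0,1) -> ... -> (0,0,1)] in
   exactly [a] jumps.  At [(i,0,1)] the [CoalA] rate is [i(i+1)/2] and the total
   rate is [(i(i+1) + rho)/2], which gives the factors of the product. *)
From HB Require Import structures.
From mathcomp Require Import all_boot all_order all_algebra.
From mathcomp Require Import reals ereal sequences topology normedtype.
From mathcomp Require Import ring.
Set Implicit Arguments. Unset Strict Implicit. Unset Printing Implicit Defensive.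
Import Order.TTheory GRing.Theory Num.Theory.
Local Open Scope ring_scope.

Lemma first_hit_nil (x : state) : first_hit x [::] = target x.
Proof. by rewrite /first_hit /=. Qed.

Lemma first_hit_cons (x : state) (m : move) (ms : seq move) :
  first_hit x (m :: ms) = ~~ target x && first_hit (step x m) ms.
Proof. by rewrite /first_hit /= negb_or andbA. Qed.

Lemma target_line (a : nat) : target (a, 0, 1)%N = (a == 0)%N.
Proof. by case: a => [|a]; rewrite /target !xpair_eqE /= ?andbF. Qed.

Lemma eseries_eq_single (R : realType) (u : nat -> R) (n : nat) :
  (forall k, k != n -> u k = 0) -> (\sum_(0 <= k <oo) (u k)%:E)%E = (u n)%:E.
Proof.
move=> u0; apply: lim_near_cst => //; near=> N.
rewrite sumEFin (bigD1_seq n) ?iota_uniq //=; last first.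
  by rewrite mem_index_iota; near: N; exists n.+1.
by rewrite big1 ?addr0 // => k /u0.
Unshelve. all: by end_near.
Qed.

Section NoRecombination.
Variables (R : realType) (rho : R).
Hypothesis rho_gt0 : 0 < rho.

Definition norecomb_hit_weight (x : state) (k : nat) : R :=
  \sum_(ms <- all_paths k | first_hit x ms && (count isRecomb ms == 0)%N)
     path_weight rho x ms.

Lemma norecomb_hit_weight0 (x : state) :
  norecomb_hit_weight x 0 = (target x)%:R.
Proof.
by rewrite /norecomb_hit_weight big_mkcond big_seq1 first_hit_nil /=; case: target.
Qed.

Lemma norecomb_hit_weightS (x : state) (k : nat) :
  norecomb_hit_weight x k.+1 =
  if target x then 0
  else \sum_(m <- all_moves | ~~ isRecomb m)
         jump_prob rho x m * norecomb_hit_weight (step x m) k.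
Proof.
rewrite /norecomb_hit_weight big_mkcond big_allpairs_dep.
case: ifP => tx.
  by rewrite big1 // => m _; rewrite big1 // => ms _; rewrite first_hit_cons tx.
rewrite [RHS]big_mkcond; apply: eq_bigr => m _.
case Rm: (isRecomb m); first by rewrite big1 // => ms _; rewrite /= Rm andbF.
rewrite big_distrr [in RHS]big_mkcond; apply: eq_bigr => ms _.
by rewrite first_hit_cons tx /= Rm; case: ifP; rewrite ?mulr0.
Qed.

Lemma jump_prob_line (a : nat) (m : move) :
  jump_prob rho (a, 0, 1)%N m =
  match m with
  | Recomb => rho / ((a * a.+1)%:R + rho)
  | CoalA => (a * a.+1)%:R / ((a * a.+1)%:R + rho)
  | _ => 0
  end.
Proof.
rewrite /jump_prob /total_rate /rate !big_cons big_nil.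
rewrite !(mulr0, mul0r, mulr1, mul1r, subrr, add0r, addr0).
case: m; rewrite ?mul0r //.
all: by field; rewrite gt_eqF // ltr_wpDl // mulr_ge0 // addr_ge0.
Qed.

Lemma norecomb_hit_weight_line (a k : nat) :
  norecomb_hit_weight (a, 0, 1)%N k =
  if k == a then \prod_(1 <= i < a.+1) ((i * i.+1)%:R / ((i * i.+1)%:R + rho))
  else 0.
Proof.
elim: k a => [|k IHk] a.
  by rewrite norecomb_hit_weight0 target_line; case: a => [|a] //; rewrite big_geq.
rewrite norecomb_hit_weightS target_line; case: a => [|a] //.
rewrite [in RHS]big_nat_recr // eqSS.
rewrite !big_cons big_nil [LHS]/= !jump_prob_line [LHS]/= IHk.
by rewrite !mul0r !add0r addr0; case: eqP => _; rewrite ?mulr0 // mulrC.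
Qed.

Lemma prob_no_recomb_before_tauE (x : state) :
  prob_no_recomb_before_tau rho x = (\sum_(0 <= k <oo) (norecomb_hit_weight x k)%:E)%E.
Proof. by []. Qed.

End NoRecombination.

Theorem mainTheorem10 (R : realType) (rho : R) (n : nat) (hrho : 0 < rho) :
  prob_no_recomb_before_tau rho (n, 0, 1)%N =
  (\prod_(1 <= i < n.+1) ((i * i.+1)%:R / ((i * i.+1)%:R + rho)))%:E.
Proof.
rewrite prob_no_recomb_before_tauE (eseries_eq_single (n := n)).
- by rewrite norecomb_hit_weight_line // eqxx.
- by move=> k /negbTE kn; rewrite norecomb_hit_weight_line // kn.
Qed.
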